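(* Let $\mathsf k_1,\mathsf k_2,\mathsf k_3$ be nonzero, and let $(\{\lambda_j\}_{j\le L},\{\mu_h\}_{h\le M})$ be a solution of the Bethe equations satisfying $\lambda_l\ne\lambda_m$, $\mu_p\ne\mu_q$, $\mu_q\ne\lambda_m$ for all $l\ne m$, $p\ne q$, and $\{\mu_h\}\cap\{\xi_n\}=\emptyset$. Let $t_1(\lambda)=t_1(\lambda|\{\lambda_j\},\{\mu_h\})$, set $x_a=t_1(\xi_a)$ and let $t_n(\lambda)=t_n(\lambda|\{x_a\})$, $n\ge2$, be the interpolation polynomials. Then $$t_2(\lambda)=\Lambda_1(\lambda)\big(\mathsf k_1t_1(\lambda+\eta)+\mathsf k_2\mathsf k_3d(\lambda)\big)/\mathsf k_1=\Lambda_1(\lambda)\big(\Lambda_1(\lambda+\eta)-\Lambda_2(\lambda+\eta)-\Lambda_3(\lambda+\eta)+\mathsf k_2\mathsf k_3d(\lambda)/\mathsf k_1\big),$$ and $t_{n+1}(\lambda)=\Lambda_1(\lambda)\,t_n(\lambda+\eta)$ for all $n\ge2$.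
   Context: Fix a nonzero complex number $\eta$, an integer $\mathsf N\ge1$ and complex inhomogeneities $\xi_1,\dots,\xi_{\mathsf N}$ with $\xi_a-\xi_b\notin\eta\mathbb Z$ for $a\ne b$. This concerns the fundamental $gl_{1|2}$ model with diagonal twist $K=\operatorname{diag}(\mathsf k_1,\mathsf k_2,\mathsf k_3)$. Write $d(\lambda)=\prod_{n=1}^{\mathsf N}(\lambda-\xi_n)$, $a(\lambda)=d(\lambda+\eta)$, and $f^{(m)}_a(\lambda)=\prod_{b\ne a}\frac{\lambda-\xi_b}{\xi_a-\xi_b}\prod_{b=1}^{\mathsf N}\prod_{r=1}^{m-1}\frac{1}{\xi_a-\xi_b+r\eta}$. Let $T_{\infty,1}=\mathsf k_1-\mathsf k_2-\mathsf k_3$ and $T_{\infty,n}=\mathsf k_1^{n-2}(\mathsf k_1-\mathsf k_2)(\mathsf k_1-\mathsf k_3)$ for $n\ge2$. Interpolation polynomials in unknowns $\{x_a\}$: $t_1(\lambda|\{x_a\})=T_{\infty,1}d(\lambda)+\sum_af^{(1)}_a(\lambda)x_a$ and, for $n\ge1$, $t_{n+1}(\lambda|\{x_a\})=\prod_{r=1}^nd(\lambda+r\eta)\big[T_{\infty,n+1}d(\lambda)+\sum_af^{(n+1)}_a(\lambda)t_n(\xi_a+\eta|\{x_a\})x_a\big]$. Bethe Ansatz: $Q_1(\lambda)=\prod_{l=1}^L(\lambda-\lambda_l)$, $Q_2(\lambda)=\prod_{m=1}^M(\lambda-\mu_m)$; Bethe equations: $\mathsf k_1Q_2(\lambda_j)a(\lambda_j)=\mathsf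 k_2d(\lambda_j)Q_2(\lambda_j+\eta)$ ($j\le L$) and $\mathsf k_2Q_2(\mu_j+\eta)Q_1(\mu_j-\eta)=-\mathsf k_3Q_2(\mu_j-\eta)Q_1(\mu_j)$ ($j\le M$). Define $\Lambda_1(\lambda)=\mathsf k_1a(\lambda)\frac{Q_1(\lambda-\eta)}{Q_1(\lambda)}$, $\Lambda_2(\lambda)=\mathsf k_2d(\lambda)\frac{Q_1(\lambda-\eta)Q_2(\lambda+\eta)}{Q_1(\lambda)Q_2(\lambda)}$, $\Lambda_3(\lambda)=\mathsf k_3d(\lambda)\frac{Q_2(\lambda-\eta)}{Q_2(\lambda)}$, and $t_1(\lambda|\{\lambda_j\},\{\mu_h\})=\Lambda_1(\lambda)-\Lambda_2(\lambda)-\Lambda_3(\lambda)$. *)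

(* The complex field is modelled by an arbitrary
   numClosedFieldType R (algebraically closed, characteristic 0). *)
From HB Require Import structures.
From mathcomp Require Import all_boot all_order all_algebra.
Set Implicit Arguments. Unset Strict Implicit. Unset Printing Implicit Defensive.
Import Order.TTheory GRing.Theory Num.Theory.
Local Open Scope ring_scope.

Section GL12.
Variable R : numClosedFieldType.

Definition dfun (N : nat) (xi : 'I_N -> R) (l : R) : R :=
  \prod_(n < N) (l - xi n).

Definition Qfun (L : nat) (r : 'I_L -> R) (l : R) : R :=
  \prod_(j < L) (l - r j).

Definition Tinf (k1 k2 k3 : R) (n : nat) : R :=
  if n == 1%N then k1 - k2 - k3
  else k1 ^+ (n - 2) * (k1 - k2) * (k1 - k3).

Definition fcoef (N : nat) (xi : 'I_N -> R) (eta : R) (m : nat) (a : 'I_N) (l : R) : R :=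
  (\prod_(b < N | b != a) ((l - xi b) / (xi a - xi b))) *
  \prod_(b < N) \prod_(1 <= r < m) (xi a - xi b + r%:R * eta)^-1.

(* interpolation polynomials t_n(l | {x_a}), n >= 1 (index 0 is unused, set to 0) *)
Fixpoint tinterp (N : nat) (xi : 'I_N -> R) (eta k1 k2 k3 : R) (x : 'I_N -> R)
  (n : nat) (l : R) {struct n} : R :=
  match n with
  | 0 => 0
  | 1 => Tinf k1 k2 k3 1 * dfun xi l + \sum_(a < N) fcoef xi eta 1 a l * x a
  | (m.+1 as k).+1 =>
      (\prod_(1 <= r < k.+1) dfun xi (l + r%:R * eta)) *
      (Tinf k1 k2 k3 k.+1 * dfun xi l +
       \sum_(a < N) fcoef xi eta k.+1 a l * tinterp xi eta k1 k2 k3 x k (xi a + eta) * x a)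
  end.

(* Lambda_1, Lambda_2, Lambda_3 (rational functions, evaluated pointwise) *)
Definition Lam1 (N L : nat) (xi : 'I_N -> R) (eta k1 : R) (lam : 'I_L -> R) (l : R) : R :=
  k1 * dfun xi (l + eta) * Qfun lam (l - eta) / Qfun lam l.

Definition Lam2 (N L M : nat) (xi : 'I_N -> R) (eta k2 : R)
  (lam : 'I_L -> R) (mu : 'I_M -> R) (l : R) : R :=
  k2 * dfun xi l * (Qfun lam (l - eta) * Qfun mu (l + eta)) / (Qfun lam l * Qfun mu l).

Definition Lam3 (N M : nat) (xi : 'I_N -> R) (eta k3 : R) (mu : 'I_M -> R) (l : R) : R :=
  k3 * dfun xi l * Qfun mu (l - eta) / Qfun mu l.

Definition t1BA (N L M : nat) (xi : 'I_N -> R) (eta k1 k2 k3 : R)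
  (lam : 'I_L -> R) (mu : 'I_M -> R) (l : R) : R :=
  Lam1 xi eta k1 lam l - Lam2 xi eta k2 lam mu l - Lam3 xi eta k3 mu l.

(* p is the polynomial t_1(l | {lambda_j},{mu_h}): it agrees with the
   rational expression wherever the latter is defined *)
Definition is_t1poly (N L M : nat) (xi : 'I_N -> R) (eta k1 k2 k3 : R)
  (lam : 'I_L -> R) (mu : 'I_M -> R) (p : {poly R}) : Prop :=
  forall l : R, Qfun lam l != 0 -> Qfun mu l != 0 ->
    p.[l] = t1BA xi eta k1 k2 k3 lam mu l.

End GL12.

From HB Require Import structures.
From mathcomp Require Import all_boot all_order all_algebra.
From mathcomp Require Import ring zify.
Import Order.TTheory GRing.Theory Num.Theory.
Set Implicit Arguments. Unset Strict Implicit. Unset Printing Implicit Defensive.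
Local Open Scope ring_scope.

(* The Bethe equations for the lam_j and the mu_h are exactly the conditions
   for Q1 and then Q2 to divide the numerators of Lam1 - Lam2 and of t1, so t1
   is a polynomial of degree N with leading coefficient k1 - k2 - k3, and
   t1(xi_a) = Lam1(xi_a) because d(xi_a) = 0.  The Bethe equation for lam_j
   also makes Q1 divide k1 t1(l + eta) + k2 k3 d(l) = Q1(l) D(l).  The
   polynomial E_k(l) = k1^k Q1(l - eta) D(l + k eta) has degree N and leading
   coefficient T_{infty,k+2}, and Lam1(l) E_k(l + eta) = d(l + eta) E_{k+1}(l).
   Hence the bracket defining t_{k+2} is the Lagrange interpolation of E_k at
   the xi_a, and by induction t_{k+2}(l) = prod_{r=1}^{k+1} d(l + r eta) E_k(l).
   Both claims are read off this closed form. *)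

Section TopCoef.
Variable R : idomainType.
Implicit Types (p q : {poly R}) (c : R).

(* [top_coef n c p]: p has degree at most n and its coefficient of X^n is c
   (so c = 0 is allowed, and then the degree is smaller). *)
Definition top_coef n c p := (size p <= n.+1)%N /\ p`_n = c.

Lemma top_coefD n c c' p q :
  top_coef n c p -> top_coef n c' q -> top_coef n (c + c') (p + q).
Proof.
move=> [sp ep] [sq eq]; split; last by rewrite coefD ep eq.
by apply: leq_trans (size_polyD _ _) _; rewrite geq_max sp sq.
Qed.

Lemma top_coefB n c c' p q :
  top_coef n c p -> top_coef n c' q -> top_coef n (c - c') (p - q).
Proof.
move=> hp [sq eq]; apply: top_coefD hp _.
by split; rewrite ?size_polyN // coefN eq.
Qed.

Lemma top_coefZ n k c p : top_coef n c p -> top_coef n (k * c) (k *: p).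
Proof.
move=> [sp ep]; split; last by rewrite coefZ ep.
exact: leq_trans (size_scale_leq _ _) sp.
Qed.

Lemma top_coefM n m c c' p q :
  top_coef n c p -> top_coef m c' q -> top_coef (n + m) (c * c') (p * q).
Proof.
move=> [sp ep] [sq eq]; split.
  by apply: leq_trans (size_polyMleq _ _) _; move: sp sq; lia.
rewrite coefM (bigD1 (Ordinal (leq_addr m n : n < (n + m).+1)%N)) //= ep addKn eq.
rewrite big1 ?addr0 // => -[j /= lt_j] /eqP ne_j.
have [lt_jn|lt_nj|eq_jn] := ltngtP j n; last by case: ne_j; apply: val_inj.
  by rewrite [q`_ _](leq_sizeP _ _ sq) ?mulr0 //; lia.
by rewrite [p`__](leq_sizeP _ _ sp) ?mul0r.
Qed.

Lemma top_coef_monic n p : p \is monic -> size p = n.+1 -> top_coef n 1 p.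
Proof.
by move=> /monicP lead_p sp; split; rewrite ?sp // -lead_p lead_coefE sp.
Qed.

Lemma top_coef_monicMlK m n c p q : p \is monic -> size p = m.+1 ->
  top_coef (m + n) c (p * q) -> top_coef n c q.
Proof.
move=> mon_p sp [spq epq].
have sq : (size q <= n.+1)%N.
  have [->|q_neq0] := eqVneq q 0; first by rewrite size_poly0.
  by move: spq; rewrite size_monicM // sp; lia.
have [_] := top_coefM (top_coef_monic mon_p sp) (conj sq erefl).
by rewrite epq mul1r.
Qed.

Lemma top_coef_shift n c p a : top_coef n c p -> top_coef n c (p \Po ('X + a%:P)).
Proof.
move=> [sp ep]; have size_shift : size (p \Po ('X + a%:P)) = size p.
  by rewrite size_comp_poly2 // size_XaddC.
split; first by rewrite size_shift.
have [lt_pn|] := ltnP (size p) n.+1.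
  have lt_shift : (size (p \Po ('X + a%:P)) <= n)%N by rewrite size_shift.
  by rewrite -ep (leq_sizeP _ _ lt_pn) ?(leq_sizeP _ _ lt_shift).
rewrite leq_eqVlt ltnNge sp orbF => /eqP size_p.
have := @lead_coef_comp _ p ('X + a%:P); rewrite size_XaddC lead_coefXaddC.
by rewrite expr1n mulr1 !lead_coefE size_shift -size_p => ->.
Qed.

Lemma top_coef0_size n p : top_coef n 0 p -> (size p <= n)%N.
Proof.
move=> [sp ep]; move: sp; rewrite leq_eqVlt ltnS => /orP[/eqP sp|//].
have /eqP : lead_coef p = 0 by rewrite lead_coefE sp ep.
by rewrite lead_coef_eq0 => /eqP p0; rewrite p0 size_poly0 in sp.
Qed.

End TopCoef.

Lemma monic_comp_XaddC (R : idomainType) (p : {poly R}) a :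
  p \is monic -> p \Po ('X + a%:P) \is monic.
Proof.
move=> /monicP lead_p; apply/monicP.
by rewrite lead_coef_comp ?size_XaddC // lead_coefXaddC expr1n mulr1.
Qed.

Lemma poly_horner_inj (R : numDomainType) (p q : {poly R}) :
  (forall x, p.[x] = q.[x]) -> p = q.
Proof.
move=> epq; apply/eqP; rewrite -subr_eq0; apply/eqP.
apply: (@roots_geq_poly_eq0 _ _ [seq i%:R | i <- iota 0 (size (p - q))]).
- by apply/allP => _ /mapP[i _ ->]; rewrite /root !hornerE epq subrr.
- by rewrite map_inj_uniq ?iota_uniq // => i j /eqP; rewrite eqr_nat => /eqP.
- by rewrite size_map size_iota.
Qed.

Lemma horner_mulK (F : fieldType) (p q r : {poly F}) x :
  p * q = r -> q.[x] != 0 -> p.[x] = r.[x] / q.[x].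
Proof. by move=> <- q_neq0; rewrite hornerM mulfK. Qed.

Section Interpolation.
Variables (F : fieldType) (N : nat) (xi : 'I_N -> F).
Hypothesis xi_inj : injective xi.

Definition node_poly : {poly F} := \prod_(b < N) ('X - (xi b)%:P).

Definition lagrange_basis (a : 'I_N) : {poly F} :=
  (\prod_(b < N | b != a) (xi a - xi b))^-1 *: \prod_(b < N | b != a) ('X - (xi b)%:P).

Lemma size_node_poly : size node_poly = N.+1.
Proof. by rewrite size_prod_XsubC /index_enum unlock -enumT size_enum_ord. Qed.

Lemma top_coef_lagrange_basis a : top_coef N 0 (lagrange_basis a).
Proof.
have size_ell : size (\prod_(b < N | b != a) ('X - (xi b)%:P)) = N.
  move: size_node_poly; rewrite /node_poly (bigD1 a) //= size_monicM ?monicXsubC //.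
    by rewrite size_XsubC => -[].
  exact/monic_neq0/monic_prod_XsubC.
rewrite -[0](mulr0 (\prod_(b < N | b != a) (xi a - xi b))^-1); apply: top_coefZ.
by split; rewrite ?size_ell // (leq_sizeP _ _ (eq_leq size_ell)).
Qed.

Lemma horner_lagrange_basis a l :
  (lagrange_basis a).[l] = \prod_(b < N | b != a) ((l - xi b) / (xi a - xi b)).
Proof.
rewrite hornerZ horner_prod -prodfV -big_split /=.
by apply: eq_bigr => b _; rewrite hornerXsubC mulrC.
Qed.

Lemma lagrange_basis_node a b : (lagrange_basis a).[xi b] = (a == b)%:R.
Proof.
rewrite horner_lagrange_basis; have [<-|ne_ab] := eqVneq a b.
  apply: big1 => c ne_ca; rewrite divff // subr_eq0.
  by apply: contra ne_ca => /eqP/xi_inj->.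
by rewrite (bigD1 b) 1?eq_sym //= subrr mul0r mul0r.
Qed.

Lemma lagrange_interpolation_poly T E : top_coef N T E ->
  E = T *: node_poly + \sum_(a < N) E.[xi a] *: lagrange_basis a.
Proof.
move=> topE; apply/eqP; rewrite -subr_eq0 opprD addrA; apply/eqP.
apply: (@roots_geq_poly_eq0 _ _ [seq xi b | b <- enum 'I_N]).
- apply/allP => _ /mapP[b _ ->]; rewrite /root !hornerE horner_sum.
  rewrite (bigD1 b) //= big1 => [|a ne_ab]; last first.
    by rewrite hornerZ lagrange_basis_node (negbTE ne_ab) mulr0.
  rewrite hornerZ lagrange_basis_node eqxx mulr1 horner_prod (bigD1 b) //=.
  by rewrite hornerXsubC subrr mul0r mulr0 subr0 addr0 subrr.
- by rewrite map_inj_uniq ?enum_uniq.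
rewrite size_map size_enum_ord; apply: top_coef0_size.
have topS : top_coef N 0 (\sum_(a < N) E.[xi a] *: lagrange_basis a).
  apply: big_ind => [|p q tp tq|a _]; first by split; rewrite ?size_poly0 ?coef0.
    by rewrite -[0]addr0; apply: top_coefD.
  by rewrite -(mulr0 E.[xi a]); apply/top_coefZ/top_coef_lagrange_basis.
have topN := top_coef_monic (monic_prod_XsubC _ _ _) size_node_poly.
by have := top_coefB (top_coefB topE (top_coefZ T topN)) topS; rewrite mulr1 !subrr.
Qed.

Lemma lagrange_interpolation T E l : top_coef N T E ->
  E.[l] = T * \prod_(b < N) (l - xi b)
        + \sum_(a < N) (\prod_(b < N | b != a) ((l - xi b) / (xi a - xi b))) * E.[xi a].
Proof.
move=> /lagrange_interpolation_poly {1}->.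
rewrite hornerD hornerZ horner_sum horner_prod; congr (_ * _ + _).
  by apply: eq_bigr => b _; rewrite hornerXsubC.
by apply: eq_bigr => a _; rewrite hornerZ horner_lagrange_basis mulrC.
Qed.

End Interpolation.

Section Qpoly.
Variable R : numClosedFieldType.

Lemma Qfun_eq0 K (r : 'I_K -> R) l : (Qfun r l == 0) = [exists i, l == r i].
Proof.
rewrite /Qfun; apply/prodf_eq0/existsP => [[i _]|[i /eqP->]].
  by rewrite subr_eq0; exists i.
by exists i; rewrite ?subrr.
Qed.

Lemma Qfun_root K (r : 'I_K -> R) i : Qfun r (r i) = 0.
Proof. by apply/eqP; rewrite Qfun_eq0; apply/existsP; exists i. Qed.

Lemma Qfun_neq0 K (r : 'I_K -> R) l : (forall i, l != r i) -> Qfun r l != 0.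
Proof. by move=> ne_r; rewrite Qfun_eq0 negb_exists; apply/forallP. Qed.

Definition Qpoly K (r : 'I_K -> R) (c : R) : {poly R} :=
  \prod_(i < K) ('X - (r i - c)%:P).

Lemma horner_Qpoly K (r : 'I_K -> R) c l : (Qpoly r c).[l] = Qfun r (l + c).
Proof.
by rewrite horner_prod; apply: eq_bigr => i _; rewrite hornerXsubC opprB addrA.
Qed.

Lemma horner_Qpoly0 K (r : 'I_K -> R) l : (Qpoly r 0).[l] = Qfun r l.
Proof. by rewrite horner_Qpoly addr0. Qed.

Definition horner_QpolyE :=
  (hornerD, hornerN, hornerM, hornerZ, horner_Qpoly0, horner_Qpoly).

Lemma Qpoly_monic K (r : 'I_K -> R) c : Qpoly r c \is monic.
Proof. exact: monic_prod_XsubC. Qed.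

Lemma size_Qpoly K (r : 'I_K -> R) c : size (Qpoly r c) = K.+1.
Proof. by rewrite size_prod_XsubC /index_enum unlock -enumT size_enum_ord. Qed.

Lemma top_coef_Qpoly K (r : 'I_K -> R) c : top_coef K 1 (Qpoly r c).
Proof. exact: top_coef_monic (Qpoly_monic _ _) (size_Qpoly _ _). Qed.

Lemma Qpoly_dvdp K (r : 'I_K -> R) (p : {poly R}) :
  injective r -> (forall i, p.[r i] = 0) -> Qpoly r 0 %| p.
Proof.
move=> r_inj p_r; have := @uniq_roots_dvdp _ p [seq r i | i <- index_enum 'I_K].
rewrite big_map uniq_rootsE map_inj_uniq ?index_enum_uniq //.
have -> : \prod_(i <- index_enum 'I_K) ('X - (r i)%:P) = Qpoly r 0.
  by apply: eq_bigr => i _; rewrite subr0.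
by apply=> //; apply/allP => _ /mapP[i _ ->]; apply/rootP.
Qed.

Lemma tinterpSS N (xi : 'I_N -> R) eta k1 k2 k3 x k l :
  tinterp xi eta k1 k2 k3 x k.+2 l =
  \prod_(1 <= r < k.+2) dfun xi (l + r%:R * eta) *
  (Tinf k1 k2 k3 k.+2 * dfun xi l +
   \sum_(a < N) fcoef xi eta k.+2 a l * tinterp xi eta k1 k2 k3 x k.+1 (xi a + eta) * x a).
Proof. by []. Qed.

Lemma dfunE N (xi : 'I_N -> R) : dfun xi = Qfun xi.
Proof. by []. Qed.

Lemma TinfSS (k1 k2 k3 : R) k :
  Tinf k1 k2 k3 k.+2 = k1 ^+ k * ((k1 - k2) * (k1 - k3)).
Proof. by rewrite /Tinf /= -mulrA; congr (_ ^+ _ * _); lia. Qed.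

Lemma fcoef_shift N (xi : 'I_N -> R) eta m a l :
  fcoef xi eta m a l = (\prod_(b < N | b != a) ((l - xi b) / (xi a - xi b)))
                       / \prod_(1 <= r < m) dfun xi (xi a + r%:R * eta).
Proof.
rewrite /fcoef exchange_big /= -prodfV; congr (_ * _); apply: eq_bigr => r _.
by rewrite -prodfV; apply: eq_bigr => b _; rewrite addrAC.
Qed.

End Qpoly.

Section BetheAnsatz.
Variables (R : numClosedFieldType) (N L M : nat) (xi : 'I_N -> R)
  (eta k1 k2 k3 : R) (lam : 'I_L -> R) (mu : 'I_M -> R).

Local Notation d := (Qfun xi).
Local Notation Q1 := (Qfun lam).
Local Notation Q2 := (Qfun mu).
Local Notation Lam1 := (Lam1 xi eta k1 lam).

Hypothesis eta_neq0 : eta != 0.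
Hypothesis xi_gap :
  forall a b : 'I_N, a != b -> forall z : int, xi a - xi b != z%:~R * eta.
Hypothesis k1_neq0 : k1 != 0.
Hypothesis bethe_lam : forall j : 'I_L,
  k1 * Q2 (lam j) * d (lam j + eta) = k2 * d (lam j) * Q2 (lam j + eta).
Hypothesis bethe_mu : forall j : 'I_M,
  k2 * Q2 (mu j + eta) * Q1 (mu j - eta) = - (k3 * Q2 (mu j - eta) * Q1 (mu j)).
Hypothesis lam_inj : injective lam.
Hypothesis mu_inj : injective mu.
Hypothesis mu_neq_lam : forall (q : 'I_M) (m : 'I_L), mu q != lam m.
Hypothesis mu_neq_xi : forall (h : 'I_M) (n : 'I_N), mu h != xi n.

Lemma xi_inj : injective xi.
Proof.
move=> a b eq_ab; apply/eqP; apply: contraT => /xi_gap/(_ 0).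
by rewrite eq_ab subrr mul0r eqxx.
Qed.

Lemma xi_shift_neq a b (z : int) : z != 0 -> xi a + z%:~R * eta != xi b.
Proof.
move=> z_neq0; have [<-|ne_ab] := eqVneq a b.
  rewrite -subr_eq0 [xi a + _]addrC addrK mulf_eq0 intr_eq0.
  by rewrite (negbTE z_neq0) (negbTE eta_neq0).
apply: contra (xi_gap ne_ab (- z)) => /eqP<-.
by rewrite mulrNz mulNr opprD addrA subrr sub0r.
Qed.

Lemma Q2_xi_neq0 a : Q2 (xi a) != 0.
Proof. by apply: Qfun_neq0 => h; rewrite eq_sym. Qed.

Lemma Q2_lam_neq0 j : Q2 (lam j) != 0.
Proof. by apply: Qfun_neq0 => h; rewrite eq_sym. Qed.

Lemma Q1_mu_neq0 h : Q1 (mu h) != 0.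
Proof. exact: Qfun_neq0. Qed.

Lemma Q1_xi_neq0 a : Q1 (xi a) != 0.
Proof.
apply: Qfun_neq0 => j; apply/eqP => xi_lam; have := bethe_lam j.
rewrite -xi_lam Qfun_root mulr0 mul0r => /eqP.
rewrite !mulf_eq0 (negbTE k1_neq0) (negbTE (Q2_xi_neq0 a)) Qfun_eq0 /=.
case/existsP => b; have := xi_shift_neq a b (z := 1) isT.
by rewrite mulr1z mul1r => /negbTE->.
Qed.

Lemma Q2_lam_shift_neq0 j : Q2 (lam j + eta) != 0.
Proof.
apply/eqP => Q2_0; have := bethe_lam j; rewrite Q2_0 mulr0 => /eqP.
rewrite !mulf_eq0 (negbTE k1_neq0) (negbTE (Q2_lam_neq0 j)) Qfun_eq0 /=.
case/existsP => n /eqP xi_n; move/eqP: Q2_0; rewrite Qfun_eq0.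
by case/existsP => h; rewrite xi_n eq_sym (negbTE (mu_neq_xi h n)).
Qed.

Lemma d_xi_shift_neq0 a r : (0 < r)%N -> d (xi a + r%:R * eta) != 0.
Proof.
move=> r_gt0; apply: Qfun_neq0 => b.
by have := xi_shift_neq a b (z := r%:Z); rewrite -lt0n r_gt0 => /(_ isT).
Qed.

(* Lam1 - Lam2 = Q1(l - eta) lam12_poly(l) / Q2(l) and t1 = t1_poly. *)
Definition lam12_num : {poly R} :=
  k1 *: (Qpoly xi eta * Qpoly mu 0) - k2 *: (Qpoly xi 0 * Qpoly mu eta).

Definition lam12_poly := lam12_num %/ Qpoly lam 0.

Lemma lam12_polyK : lam12_poly * Qpoly lam 0 = lam12_num.
Proof.
apply/divpK/Qpoly_dvdp => // j; rewrite !horner_QpolyE.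
by rewrite [d _ * _]mulrC mulrA bethe_lam mulrA subrr.
Qed.

Definition t1_num : {poly R} :=
  Qpoly lam (- eta) * lam12_poly - k3 *: (Qpoly xi 0 * Qpoly mu (- eta)).

Definition t1_poly := t1_num %/ Qpoly mu 0.

Lemma t1_polyK : t1_poly * Qpoly mu 0 = t1_num.
Proof.
apply/divpK/Qpoly_dvdp => // h; apply: (mulIf (Q1_mu_neq0 h)); rewrite mul0r.
have lam12_mu := congr1 (horner^~ (mu h)) lam12_polyK.
rewrite /= !horner_QpolyE Qfun_root in lam12_mu.
rewrite !horner_QpolyE mulrBl -mulrA {}lam12_mu.
transitivity (- d (mu h) * (k2 * Q2 (mu h + eta) * Q1 (mu h - eta)
                           + k3 * Q2 (mu h - eta) * Q1 (mu h))); first ring.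
by rewrite bethe_mu addNr mulr0.
Qed.

Lemma horner_t1_poly l : Q1 l != 0 -> Q2 l != 0 ->
  t1_poly.[l] = t1BA xi eta k1 k2 k3 lam mu l.
Proof.
move=> Q1_l Q2_l.
rewrite (horner_mulK t1_polyK) horner_Qpoly0 // !horner_QpolyE.
rewrite (horner_mulK lam12_polyK) horner_Qpoly0 // !horner_QpolyE.
by rewrite /t1BA /Lam1 /Lam2 /Lam3 dfunE; field; rewrite Q1_l Q2_l.
Qed.

Lemma t1_poly_unique p : is_t1poly xi eta k1 k2 k3 lam mu p -> p = t1_poly.
Proof.
move=> t1_p; apply: (mulIf (monic_neq0 (Qpoly_monic lam 0))).
apply: (mulIf (monic_neq0 (Qpoly_monic mu 0))); apply: poly_horner_inj => l.
rewrite !hornerM !horner_Qpoly0.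
have [->|Q1_l] := eqVneq (Q1 l) 0; first by rewrite !mulr0 !mul0r.
have [->|Q2_l] := eqVneq (Q2 l) 0; first by rewrite !mulr0.
by rewrite t1_p // horner_t1_poly.
Qed.

Lemma t1_poly_xi a : t1_poly.[xi a] = Lam1 (xi a).
Proof.
rewrite horner_t1_poly ?Q1_xi_neq0 ?Q2_xi_neq0 // /t1BA /Lam2 /Lam3 dfunE Qfun_root.
by rewrite !(mulr0, mul0r, subr0).
Qed.

Lemma top_coef_t1_poly : top_coef N (k1 - k2 - k3) t1_poly.
Proof.
have Q12_monic : Qpoly lam 0 * Qpoly mu 0 \is monic by rewrite monicMl Qpoly_monic.
have size_Q12 : size (Qpoly lam 0 * Qpoly mu 0) = (L + M).+1.
  by rewrite size_monicM ?monic_neq0 ?Qpoly_monic // !size_Qpoly addSn addnS.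
apply: (top_coef_monicMlK Q12_monic size_Q12).
have -> : Qpoly lam 0 * Qpoly mu 0 * t1_poly =
    Qpoly lam (- eta) * lam12_num - k3 *: (Qpoly lam 0 * (Qpoly xi 0 * Qpoly mu (- eta))).
  rewrite -lam12_polyK -mulrA [_ * t1_poly]mulrC t1_polyK /t1_num -!mul_polyC; ring.
have top12 : top_coef (N + M) (k1 - k2) lam12_num.
  have [topQx topQm] := (top_coef_Qpoly xi, top_coef_Qpoly mu).
  have := top_coefB (top_coefZ k1 (top_coefM (topQx eta) (topQm 0)))
                    (top_coefZ k2 (top_coefM (topQx 0) (topQm eta))).
  by rewrite !mulr1.
have := top_coefB (top_coefM (top_coef_Qpoly lam (- eta)) top12)
  (top_coefZ k3 (top_coefM (top_coef_Qpoly lam 0)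
                  (top_coefM (top_coef_Qpoly xi 0) (top_coef_Qpoly mu (- eta))))).
by rewrite !mul1r !mulr1 [(N + M)%N]addnC addnA.
Qed.

Definition D_num : {poly R} :=
  k1 *: (t1_poly \Po ('X + eta%:P)) + (k2 * k3) *: Qpoly xi 0.

Lemma horner_D_num l : D_num.[l] = k1 * t1_poly.[l + eta] + k2 * k3 * d l.
Proof. by rewrite !horner_QpolyE horner_comp hornerD hornerX hornerC. Qed.

Lemma top_coef_D_num : top_coef N ((k1 - k2) * (k1 - k3)) D_num.
Proof.
have := top_coefD (top_coefZ k1 (top_coef_shift eta top_coef_t1_poly))
                  (top_coefZ (k2 * k3) (top_coef_Qpoly xi 0)).
by congr top_coef; ring.
Qed.

Definition D_poly := D_num %/ Qpoly lam 0.

Lemma D_polyK : D_poly * Qpoly lam 0 = D_num.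
Proof.
apply/divpK/Qpoly_dvdp => // j.
apply: (mulIf (Q2_lam_shift_neq0 j)); rewrite mul0r horner_D_num.
have t1_lam := congr1 (horner^~ (lam j + eta)) t1_polyK.
rewrite /= !horner_QpolyE addrK Qfun_root mul0r sub0r in t1_lam.
rewrite mulrDl -(mulrA k1) {}t1_lam.
transitivity (- k3 * (k1 * Q2 (lam j) * d (lam j + eta) - k2 * d (lam j) * Q2 (lam j + eta))).
  by ring.
by rewrite bethe_lam subrr mulr0.
Qed.

Lemma horner_D_poly l : Q1 l != 0 ->
  D_poly.[l] = (k1 * t1_poly.[l + eta] + k2 * k3 * d l) / Q1 l.
Proof.
by move=> Q1_l; rewrite (horner_mulK D_polyK) horner_Qpoly0 ?horner_D_num.
Qed.

Definition E_poly k : {poly R} :=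
  k1 ^+ k *: (Qpoly lam (- eta) * (D_poly \Po ('X + (k%:R * eta)%:P))).

Lemma horner_E_poly k l :
  (E_poly k).[l] = k1 ^+ k * (Q1 (l - eta) * D_poly.[l + k%:R * eta]).
Proof. by rewrite !horner_QpolyE horner_comp hornerD hornerX hornerC. Qed.

Lemma top_coef_E_poly k : top_coef N (Tinf k1 k2 k3 k.+2) (E_poly k).
Proof.
rewrite TinfSS; apply: top_coefZ; set s := k%:R * eta.
have shift_monic := monic_comp_XaddC s (Qpoly_monic lam 0).
have size_shift : size (Qpoly lam 0 \Po ('X + s%:P)) = L.+1.
  by rewrite size_comp_poly2 ?size_XaddC // size_Qpoly.
apply: (top_coef_monicMlK shift_monic size_shift).
have -> : (Qpoly lam 0 \Po ('X + s%:P)) * (Qpoly lam (- eta) * (D_poly \Po ('X + s%:P)))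
          = Qpoly lam (- eta) * (D_num \Po ('X + s%:P)).
  by rewrite -D_polyK comp_polyM; ring.
have := top_coefM (top_coef_Qpoly lam (- eta)) (top_coef_shift s top_coef_D_num).
by rewrite mul1r.
Qed.

Definition shift_prod k l := \prod_(1 <= r < k.+2) d (l + r%:R * eta).

Lemma shift_prodS k l : shift_prod k.+1 l = d (l + eta) * shift_prod k (l + eta).
Proof.
rewrite /shift_prod big_nat_recl // mul1r; congr (_ * _).
by apply: eq_bigr => r _; rewrite mulrSr mulrDl mul1r addrAC addrA.
Qed.

Lemma shift_prod_E_poly0 l : Q1 l != 0 ->
  shift_prod 0 l * (E_poly 0).[l] = Lam1 l * (k1 * t1_poly.[l + eta] + k2 * k3 * d l) / k1.
Proof.
move=> Q1_l; rewrite horner_E_poly horner_D_poly /shift_prod ?big_nat1; last first.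
  by rewrite mul0r addr0.
rewrite mul0r addr0 mul1r expr0 mul1r /Lam1 dfunE; field; exact/andP.
Qed.

Lemma shift_prod_E_polyS k l : Q1 l != 0 ->
  shift_prod k.+1 l * (E_poly k.+1).[l]
  = Lam1 l * (shift_prod k (l + eta) * (E_poly k).[l + eta]).
Proof.
move=> Q1_l; rewrite shift_prodS !horner_E_poly addrK exprS /Lam1 dfunE.
have -> : l + eta + k%:R * eta = l + k.+1%:R * eta by rewrite mulrSr; ring.
by field.
Qed.

Local Notation t := (tinterp xi eta k1 k2 k3 (fun a => t1_poly.[xi a])).

Lemma tinterp1 l : t 1 l = t1_poly.[l].
Proof.
rewrite (lagrange_interpolation xi_inj l top_coef_t1_poly) /= /Tinf /= dfunE.
congr (_ + _); apply: eq_bigr => a _; rewrite fcoef_shift big_geq ?divr1 //.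
Qed.

Lemma tinterp_bracket k E (y : 'I_N -> R) l : top_coef N (Tinf k1 k2 k3 k.+2) E ->
  (forall a, y a = shift_prod k (xi a) * E.[xi a]) ->
  Tinf k1 k2 k3 k.+2 * d l + \sum_(a < N) fcoef xi eta k.+2 a l * y a = E.[l].
Proof.
move=> topE y_xi; rewrite (lagrange_interpolation xi_inj l topE); congr (_ + _).
apply: eq_bigr => a _; rewrite fcoef_shift y_xi mulrA mulfVK //.
rewrite prodf_seq_neq0; apply/allP => r; rewrite mem_index_iota => /andP[r_gt0 _].
exact: d_xi_shift_neq0.
Qed.

Lemma tinterp_closed k l : t k.+2 l = shift_prod k l * (E_poly k).[l].
Proof.
elim: k l => [|k IHk] l; rewrite tinterpSS dfunE; congr (_ * _);
  under eq_bigr do rewrite -mulrA; apply: tinterp_bracket (top_coef_E_poly _) _ => a.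
  rewrite tinterp1 t1_poly_xi shift_prod_E_poly0 ?Q1_xi_neq0 // Qfun_root mulr0 addr0.
  by field.
by rewrite IHk t1_poly_xi shift_prod_E_polyS ?Q1_xi_neq0 // mulrC.
Qed.

Lemma tinterp2 l : Q1 l != 0 ->
  t 2 l = Lam1 l * (k1 * t1_poly.[l + eta] + k2 * k3 * d l) / k1.
Proof. by move=> Q1_l; rewrite tinterp_closed shift_prod_E_poly0. Qed.

Lemma tinterp2_Lam l : Q1 l != 0 -> Q1 (l + eta) != 0 -> Q2 (l + eta) != 0 ->
  t 2 l = Lam1 l * (Lam1 (l + eta) - Lam2 xi eta k2 lam mu (l + eta)
                    - Lam3 xi eta k3 mu (l + eta) + k2 * k3 * d l / k1).
Proof. by move=> Q1_l Q1_le Q2_le; rewrite tinterp2 // horner_t1_poly // /t1BA; field. Qed.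

Lemma tinterpS n l : (2 <= n)%N -> Q1 l != 0 -> t n.+1 l = Lam1 l * t n (l + eta).
Proof. by case: n => [|[|k]] // _ Q1_l; rewrite !tinterp_closed shift_prod_E_polyS. Qed.

End BetheAnsatz.

Theorem lemmaA1 (R : numClosedFieldType) (N L M : nat) (xi : 'I_N -> R)
  (eta k1 k2 k3 : R) (lam : 'I_L -> R) (mu : 'I_M -> R) :
  eta != 0 -> (1 <= N)%N ->
  (forall a b : 'I_N, a != b -> forall z : int, xi a - xi b != z%:~R * eta) ->
  k1 != 0 -> k2 != 0 -> k3 != 0 ->
  (* Bethe equations *)
  (forall j : 'I_L, k1 * Qfun mu (lam j) * dfun xi (lam j + eta)
                    = k2 * dfun xi (lam j) * Qfun mu (lam j + eta)) ->
  (forall j : 'I_M, k2 * Qfun mu (mu j + eta) * Qfun lam (mu j - eta)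
                    = - (k3 * Qfun mu (mu j - eta) * Qfun lam (mu j))) ->
  (* distinctness / admissibility *)
  injective lam -> injective mu ->
  (forall (q : 'I_M) (m : 'I_L), mu q != lam m) ->
  (forall (h : 'I_M) (n : 'I_N), mu h != xi n) ->
  (exists p : {poly R}, is_t1poly xi eta k1 k2 k3 lam mu p) /\
  (forall p : {poly R}, is_t1poly xi eta k1 k2 k3 lam mu p ->
   let x := fun a : 'I_N => p.[xi a] in
   let t := tinterp xi eta k1 k2 k3 x in
   (forall l : R, Qfun lam l != 0 ->
      t 2%N l = Lam1 xi eta k1 lam l * (k1 * p.[l + eta] + k2 * k3 * dfun xi l) / k1) /\
   (forall l : R, Qfun lam l != 0 -> Qfun lam (l + eta) != 0 -> Qfun mu (l + eta) != 0 ->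
      t 2%N l = Lam1 xi eta k1 lam l *
        (Lam1 xi eta k1 lam (l + eta) - Lam2 xi eta k2 lam mu (l + eta)
         - Lam3 xi eta k3 mu (l + eta) + k2 * k3 * dfun xi l / k1)) /\
   (forall (n : nat) (l : R), (2 <= n)%N -> Qfun lam l != 0 ->
      t n.+1 l = Lam1 xi eta k1 lam l * t n (l + eta))).
Proof.
move=> eta_neq0 _ xi_gap k1_neq0 _ _ bethe_lam bethe_mu lam_inj mu_inj mu_neq_lam mu_neq_xi.
split=> [|p /t1_poly_unique-> //]; first by eexists=> l; apply: horner_t1_poly.
split; [|split]=> *; [exact: tinterp2 | exact: tinterp2_Lam | exact: tinterpS].
Qed.
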